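(* Let $\mathbb{K}$ be an ordered field, $V$ a finite-dimensional vector space over $\mathbb{K}$, and $\varphi:V\to V$ a $\mathbb{K}$-linear automorphism all of whose eigenvalues (roots of the characteristic polynomial, with multiplicity) lie in $\mathbb{K}$ and are positive. Then $\varphi$ is order-preserving: there is a subset $P\subset V$ with $V=P\sqcup\{0\}\sqcup(-P)$, $P+P\subset P$, and $\varphi(P)\subset P$.
   Context: An ordering on a field $\mathbb{K}$ is a subset $Q$ with $\mathbb{K}=Q\sqcup\{0\}\sqcup(-Q)$ and $Q$ closed under addition and multiplication; elements of $Q$ are called positive. *)

From HB Require Import structures.
From mathcomp Require Import all_boot all_order all_algebra.
Set Implicit Arguments. Unset Strict Implicit. Unset Printing Implicit Defensive.
Import Order.TTheory GRing.Theory Num.Theory.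
Local Open Scope ring_scope.

(* Characteristic polynomial of a linear endomorphism of a finite-dimensional
   vector space: the characteristic polynomial of its matrix in the canonical
   basis (vbasis fullv); it does not depend on the chosen basis. *)
Definition lchar_poly (K : fieldType) (V : vectType K) (f : 'End(V)) : {poly K} :=
  char_poly (passmx.mxof (vbasis fullv) (vbasis fullv) f).

From HB Require Import structures.
From mathcomp Require Import all_boot all_order all_algebra.
Set Implicit Arguments. Unset Strict Implicit. Unset Printing Implicit Defensive.
Import Order.TTheory GRing.Theory Num.Theory passmx.
Local Open Scope ring_scope.

(* Let A be the matrix of phi, acting on row vectors by v |-> v *m A, and let
   a_1, ..., a_m > 0 be its eigenvalues.  By Cayley-Hamilton
   (A - a_1)...(A - a_m) = 0.  Put Q_k = (A - a_(k+1))...(A - a_m), so Q_0 = 0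
   and Q_m = 1.  On the subspace where v *m Q_(k-1) = 0, every coordinate of
   v *m Q_k is multiplied by a_k when v is replaced by v *m A.  Ordering the
   rows lexicographically by the coordinates of v *m Q_1, ..., v *m Q_m thus
   gives an ordering in which the first nonvanishing functional of a positive
   vector gets multiplied by a positive number, so positivity is preserved;
   the ordering is transported to V along the coordinate map. *)

Definition invariant_ordering (X : zmodType) (phi : X -> X) (P : X -> Prop) :=
  [/\ (forall v, P v \/ v = 0 \/ P (- v)),
      (forall v, P v -> v <> 0),
      (forall v, P v -> ~ P (- v)),
      (forall u v, P u -> P v -> P (u + v))
    & (forall v, P v -> P (phi v))].

Lemma invariant_ordering_pullback (Y X : zmodType) (g : {additive Y -> X})
    (psi : Y -> Y) (phi : X -> X) (P : X -> Prop) :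
  injective g -> (forall y, g (psi y) = phi (g y)) ->
  invariant_ordering phi P -> invariant_ordering psi (P \o g).
Proof.
move=> g_inj g_psi [total pos_neq0 pos_asym posD pos_phi]; split=> /=.
- move=> y; rewrite raddfN.
  have [Pgy|[gy0|Pgy]] := total (g y); [by left | | by right; right].
  by right; left; apply: g_inj; rewrite gy0 raddf0.
- by move=> y /pos_neq0 gy_neq0 y0; rewrite y0 raddf0 in gy_neq0.
- by move=> y; rewrite raddfN; exact: pos_asym.
- by move=> x y Px Py; rewrite raddfD; exact: posD.
- by move=> y /pos_phi; rewrite g_psi.
Qed.

Section LexicographicOrdering.
Variables (K : realDomainType) (X : zmodType).
Implicit Types (fs : seq {additive X -> K}) (S : pred X) (u v : X).

Fixpoint lexpos fs v : bool :=
  if fs is f :: fs' then (0 < f v) || (f v == 0) && lexpos fs' v else false.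

Definition lexker fs v : bool := all (fun f : {additive X -> K} => f v == 0) fs.

Lemma lexpos_neq0 fs v : lexpos fs v -> v != 0.
Proof.
apply: contraTN => /eqP ->.
by elim: fs => //= f fs IH; rewrite raddf0 ltxx eqxx.
Qed.

Lemma lexposN fs v : lexpos fs v -> ~~ lexpos fs (- v).
Proof.
elim: fs => //= f fs IH; rewrite raddfN oppr_gt0 oppr_eq0.
by case: (ltgtP (f v) 0).
Qed.

Lemma lexposD fs u v : lexpos fs u -> lexpos fs v -> lexpos fs (u + v).
Proof.
elim: fs => //= f fs IH; rewrite raddfD.
case/orP=> [fu_gt0|/andP[/eqP fu0 pos_u]] /orP[fv_gt0|/andP[/eqP fv0 pos_v]].
- by rewrite addr_gt0.
- by rewrite fv0 addr0 fu_gt0.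
- by rewrite fu0 add0r fv_gt0.
- by rewrite fu0 fv0 addr0 eqxx IH ?orbT.
Qed.

Lemma lexpos_trichotomy fs v :
  [|| lexpos fs v, lexker fs v | lexpos fs (- v)].
Proof.
elim: fs => //= f fs IH; rewrite raddfN oppr_gt0 oppr_eq0.
by case: (ltgtP (f v) 0); rewrite ?orbT.
Qed.

Variable phi : X -> X.

Fixpoint eigen_flag S fs : Prop :=
  if fs is f :: fs' then
    (exists2 c, 0 < c & {in S, forall v, f (phi v) = c * f v}) /\
    eigen_flag [pred v in S | f v == 0] fs'
  else True.

Lemma eigen_flag_sub S T fs :
  {subset T <= S} -> eigen_flag S fs -> eigen_flag T fs.
Proof.
elim: fs S T => //= f fs IH S T sTS [[c c_gt0 f_phi] flag]; split.
  by exists c => // v /sTS /f_phi.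
by apply: IH flag => v; rewrite !inE => /andP[/sTS -> ->].
Qed.

Lemma eigen_flag_cat S c gs fs : 0 < c ->
    {in S, forall v,
      all (fun g : {additive X -> K} => g (phi v) == c * g v) gs} ->
  eigen_flag [pred v in S | lexker gs v] fs -> eigen_flag S (gs ++ fs).
Proof.
move=> c_gt0; elim: gs S => [|g gs IH] S /= gs_phi flag.
  by apply: eigen_flag_sub flag => v Sv; rewrite inE Sv.
split; first by exists c => // v /gs_phi /andP[/eqP].
apply: IH => [v /andP[/gs_phi /andP[]] //|].
by apply: eigen_flag_sub flag => v; rewrite !inE => /andP[/andP[-> ->] ->].
Qed.

Lemma lexpos_eigen_flag S fs :
    {in S, forall v, phi v \in S} -> eigen_flag S fs ->
  {in S, forall v, lexpos fs v -> lexpos fs (phi v)}.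
Proof.
elim: fs S => //= f fs IH S S_phi [[c c_gt0 f_phi] flag] v Sv.
rewrite f_phi // pmulr_rgt0 // mulf_eq0 (gt_eqF c_gt0) /=.
case/orP=> [-> // | /andP[fv0 pos_v]]; rewrite fv0 /=; apply/orP; right.
apply: (IH _ _ flag v _ pos_v); last by rewrite inE Sv fv0.
by move=> w /andP[Sw fw0]; rewrite inE S_phi // f_phi // (eqP fw0) mulr0 /=.
Qed.

Lemma lexpos_invariant_ordering fs :
    (forall v, lexker fs v -> v = 0) -> eigen_flag predT fs ->
  invariant_ordering phi (lexpos fs).
Proof.
move=> lexker0 flag; split.
- move=> v; case/or3P: (lexpos_trichotomy fs v) => [|/lexker0|]; tauto.
- by move=> v /lexpos_neq0 /eqP.
- by move=> v /lexposN /negP.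
- exact: lexposD.
- by move=> v; apply: (lexpos_eigen_flag _ flag).
Qed.

End LexicographicOrdering.

Section MatrixFlag.
Variables (K : realDomainType) (n : nat).

Definition mxcoord (M : 'M[K]_n) (i : 'I_n) (v : 'rV[K]_n) : K := (v *m M) 0 i.

Fact mxcoord_is_zmod_morphism M i : zmod_morphism (mxcoord M i).
Proof. by move=> u v; rewrite /mxcoord mulmxBl !mxE. Qed.

HB.instance Definition _ M i :=
  GRing.isZmodMorphism.Build _ _ (mxcoord M i) (mxcoord_is_zmod_morphism M i).

Definition mxcoords M : seq {additive 'rV[K]_n -> K} :=
  [seq (mxcoord M i : {additive _ -> K}) | i <- enum 'I_n].

Variable A : 'M[K]_n.

Fixpoint prod_shiftmx (s : seq K) : 'M[K]_n :=
  if s is a :: s' then (A - a%:M) *m prod_shiftmx s' else 1%:M.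

Fixpoint flag_functionals (s : seq K) : seq {additive 'rV[K]_n -> K} :=
  if s is _ :: s' then mxcoords (prod_shiftmx s') ++ flag_functionals s'
  else [::].

Lemma lexker_mxcoords M v : lexker (mxcoords M) v -> v *m M = 0.
Proof.
rewrite /lexker /mxcoords all_map => /allP ker_v.
by apply/rowP => i; rewrite [RHS]mxE; apply/eqP/(ker_v i); rewrite mem_enum.
Qed.

Lemma lexker_flag_functionals s v :
  v *m prod_shiftmx s = 0 -> lexker (flag_functionals s) v -> v = 0.
Proof.
elim: s v => [|a s IH] v /=; first by rewrite mulmx1.
rewrite /lexker all_cat => _ /andP[/lexker_mxcoords ker_block ker_rest].
exact: IH.
Qed.

Lemma eigen_flag_functionals s (S : pred 'rV[K]_n) :
    all (fun a => 0 < a) s -> {in S, forall v, v *m prod_shiftmx s = 0} ->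
  eigen_flag (mulmxr A) S (flag_functionals s).
Proof.
elim: s S => [|a s IH] S //= /andP[a_gt0 s_gt0] S_ker.
apply: (eigen_flag_cat a_gt0) => [v /S_ker|].
  rewrite mulmxA mulmxBr mul_mx_scalar mulmxBl -scalemxAl.
  move/eqP; rewrite subr_eq0 => /eqP vAQ.
  by rewrite /mxcoords all_map; apply/allP => i _ /=; rewrite /mxcoord vAQ mxE.
by apply: IH => // v; rewrite inE => /andP[_ /lexker_mxcoords].
Qed.

End MatrixFlag.

Lemma prod_shiftmx_char (K : realDomainType) n (A : 'M[K]_n) s :
  char_poly A = \prod_(a <- s) ('X - a%:P) -> prod_shiftmx A s = 0.
Proof.
case: n A => [|n'] B char_B; first by apply/matrixP => [[]].
suff -> : prod_shiftmx B s = horner_mx B (\prod_(a <- s) ('X - a%:P)).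
  by rewrite -char_B Cayley_Hamilton.
elim: s {char_B} => [|a s IH] /=; first by rewrite big_nil !rmorph1.
by rewrite big_cons rmorphM rmorphB /= horner_mx_X horner_mx_C IH mulmxE.
Qed.

Theorem mainTheorem6 (K : realFieldType) (V : vectType K) (phi : 'End(V))
  (phi_aut : bijective phi)
  (eig : exists2 s : seq K,
      lchar_poly phi = \prod_(a <- s) ('X - a%:P) & all (fun a => 0 < a) s) :
  exists P : V -> Prop,
    [/\ (forall v : V, P v \/ v = 0 \/ P (- v)),
        (forall v : V, P v -> v <> 0),
        (forall v : V, P v -> ~ P (- v)),
        (forall u v : V, P u -> P v -> P (u + v))
      & (forall v : V, P v -> P (phi v))].
Proof.
case: eig => s char_s s_gt0.
pose e := vbasis (fullv : {vspace V}).
have e_basis : basis_of fullv e := vbasisP fullv.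
pose A := mxof e e phi.
have QA0 : prod_shiftmx A s = 0 by exact: prod_shiftmx_char.
have ordA : invariant_ordering (mulmxr A) (lexpos (flag_functionals A s)).
  apply: lexpos_invariant_ordering => [v|].
    by apply: lexker_flag_functionals; rewrite QA0 mulmx0.
  by apply: eigen_flag_functionals => // v _; rewrite QA0 mulmx0.
have rVof_inj : injective (rVof e) := can_inj (rVofK e_basis).
exists (fun v => lexpos (flag_functionals A s) (rVof e v)).
exact (invariant_ordering_pullback rVof_inj (rVof_app e e_basis phi) ordA).
Qed.
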